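(* There exist capacitated network graphs $G=(V,E)$ with arbitrarily many vertices, together with sets $\mathcal{D}$ of possible demand matrices, such that every per-destination routing $\phi$ on $G$ satisfies $PERF(\phi,\mathcal{D})=\Omega(|V|)$; i.e., the performance ratio of the optimal oblivious per-destination routing is $\Omega(|V|)$.
   Context: A network is a directed graph $G=(V,E)$ with a positive (possibly arbitrarily large) capacity $c_e$ on each edge $e$. A routing configuration $\phi$ assigns to each destination $t\in V$ and each edge $e=(u,v)\in E$ a value $\phi_t(e)\ge 0$, the fraction of the flow destined to $t$ entering $u$ that is forwarded on $e$, with $\sum_{e=(u,v)\in E}\phi_t(e)=1$ for every $u\neq t$. It is a per-destination (PD) routing if for every $t\in V$ and every directed cycle $C$ of $G$ there is an edge $e\in C$ with $\phi_t(e)=0$. For a PD routing, $f_{st}(s)=1$ and $f_{st}(v)=\sum_{e=(u,v)\in E}f_{st}(u)\phi_t(e)$ for $v\ne s$. For a demand matrix $D=(d_{st})$ with $d_{st}\ge0$, $MxLU(\phi,D)=\max_{e=(u,v)\in E}\frac{\sum_{s,t}d_{st}f_{st}(u)\phi_t(e)}{c_e}$, $OPTU(D)=\min_{\phi\text{ PD routing}}MxLU(\phi,D)$, and $PERF(\phi,\mathcal{D})=\max_{D\in\mathcal{D}}MxLU(\phi,D)/OPTU(D)$. *)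

From HB Require Import structures.
From mathcomp Require Import all_boot all_order all_algebra.
From mathcomp Require Import classical_sets reals constructive_ereal ereal.
Set Implicit Arguments. Unset Strict Implicit. Unset Printing Implicit Defensive.
Import Order.TTheory GRing.Theory Num.Theory.
Local Open Scope ring_scope.
Local Open Scope classical_set_scope.

Section Network.
Variables (R : realType) (V : finType).
Variable E : {set V * V}.
Variable cap : V * V -> R.

Definition routing_config (phi : V -> V * V -> R) : Prop :=
  forall t : V,
    (forall e, e \in E -> 0 <= phi t e) /\
    (forall u : V, u != t -> \sum_(e in E | e.1 == u) phi t e = 1).

Definition edge_rel : rel V := fun u v => (u, v) \in E.

Definition PD_routing (phi : V -> V * V -> R) : Prop :=
  routing_config phi /\
  forall (t : V) (C : seq V), C != [::] -> cycle edge_rel C ->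
    ~~ cycle (fun u v => phi t (u, v) != 0) C.

(* For a PD routing the support of phi_t is acyclic, so this system has a unique
   solution, reached after #|V| iterations of the defining equations started
   from the indicator of s. *)
Definition flow_step (phi : V -> V * V -> R) (s t : V) (g : V -> R) (v : V) : R :=
  if v == s then 1 else \sum_(e in E | e.2 == v) g e.1 * phi t e.

Definition flow (phi : V -> V * V -> R) (s t : V) : V -> R :=
  iter #|V| (flow_step phi s t) (fun v => if v == s then 1 else 0).

Definition load (phi : V -> V * V -> R) (D : V -> V -> R) (e : V * V) : R :=
  \sum_(s : V) \sum_(t : V) D s t * flow phi s t e.1 * phi t e.

(* MxLU(phi, D) = max_{e in E} load(e) / c_e  (loads are >= 0). *)
Definition MxLU (phi : V -> V * V -> R) (D : V -> V -> R) : R :=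
  \big[Num.max/0]_(e in E) (load phi D e / cap e).

Definition OPTU (D : V -> V -> R) : \bar R :=
  ereal_inf [set (MxLU phi D)%:E | phi in PD_routing].

Definition PERF (phi : V -> V * V -> R) (Ds : set (V -> V -> R)) : \bar R :=
  ereal_sup [set ((MxLU phi D)%:E / OPTU D)%E | D in Ds].

End Network.

(* On the complete digraph with unit capacities, fix a destination t and let
   D_x be one unit of demand from x to t.  The positive-weight edges of a
   per-destination routing phi towards t are acyclic, so following them from
   vertices other than t cannot avoid t forever: some x <> t sends all of its
   t-traffic over the single edge (x, t), whence MxLU(phi, D_x) >= 1.  Yet D_x
   alone can be served with congestion 1/(|V| - 1) by splitting it evenly over
   the |V| - 1 edges leaving x and letting every other vertex forward directly
   to t.  Hence PERF(phi, {D_x | x <> t}) >= |V| - 1 >= |V|/2. *)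
From HB Require Import structures.
From mathcomp Require Import all_boot all_order all_algebra.
From mathcomp Require Import classical_sets reals constructive_ereal ereal.
From mathcomp Require Import lra.
Set Implicit Arguments. Unset Strict Implicit. Unset Printing Implicit Defensive.
Import Order.TTheory GRing.Theory Num.Theory.
Local Open Scope ring_scope.
Local Open Scope classical_set_scope.

Lemma ranked_acyclic (T : eqType) (r : rel T) (rk : T -> nat) (C : seq T) :
  (forall u v, r u v -> (rk u < rk v)%N) -> C != [::] -> ~~ cycle r C.
Proof.
move=> rk_mono; case: C => // a s _; apply/negP => /=.
move=> /(homo_path (f := rk) (e' := ltn) rk_mono) /(order_path_min ltn_trans).
move=> /allP /(_ (rk a)).
by rewrite map_rcons mem_rcons mem_head ltnn => /(_ isT).
Qed.

Lemma fcycle_iterates (T : finType) (f : T -> T) (x : T) :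
  exists i k, (0 < k)%N /\ fcycle f (traject f (iter i f x) k).
Proof.
have /injectivePn [a [b ab eq_ab]] : ~~ injectiveb (fun i : 'I_#|T|.+1 => iter i f x).
  by apply/injectiveP => /leq_card; rewrite card_ord ltnn.
have loop i j : (i < j)%N -> iter j f x = iter i f x ->
    exists i k, (0 < k)%N /\ fcycle f (traject f (iter i f x) k).
  move=> lt_ij eq_ij; exists i, (j - i)%N; split; first by rewrite subn_gt0.
  case def_k: (j - i)%N => [|k] //; set y := iter i f x.
  have loop_y : iter k.+1 f y = y by rewrite /y -iterD -def_k subnK // ltnW.
  rewrite trajectS /= -[X in rcons _ X]loop_y iterSr -trajectSr.
  exact: fpath_traject.
case: (ltngtP a b) => [lt_ab|lt_ba|/val_inj a_eq_b]; last by rewrite a_eq_b eqxx in ab.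
- exact: loop lt_ab (esym eq_ab).
- exact: loop lt_ba eq_ab.
Qed.

Lemma cycle_of_successors (T : finType) (r : rel T) (A : pred T) x0 :
  (forall u, A u -> exists2 v, A v & r u v) -> A x0 -> exists2 c, c != [::] & cycle r c.
Proof.
move=> succ Ax0; pose f u := if [pick v | A v && r u v] is Some v then v else u.
have f_succ u : A u -> A (f u) && r u (f u).
  move=> Au; rewrite /f; case: pickP => [v // | none].
  by have [v Av ruv] := succ u Au; move: (none v); rewrite /= Av ruv.
have A_iter m : A (iter m f x0) by elim: m => //= m /f_succ /andP [].
have [i [k [k_gt0 cyc]]] := fcycle_iterates f x0.
exists (traject f (iter i f x0) k); first by case: k k_gt0 {cyc}.
apply: (sub_in_cycle _ _ cyc) => [u v Au _ /eqP <-|].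
  by case/andP: (f_succ u Au).
by apply/allP => _ /trajectP [m _ ->]; rewrite -iterD A_iter.
Qed.

Section Network.
Variables (R : realType) (V : finType) (E : {set V * V}) (cap : V * V -> R).
Implicit Types (phi : V -> V * V -> R) (D : V -> V -> R).

Definition unit_demand (s t : V) : V -> V -> R :=
  fun s' t' => if (s' == s) && (t' == t) then 1 else 0.

Lemma flow_iter_source phi s t k :
  iter k (flow_step E phi s t) (fun v => if v == s then 1 else 0) s = 1.
Proof. by case: k => [|k] /=; rewrite ?/flow_step eqxx. Qed.

Lemma flow_source phi s t : flow E phi s t s = 1.
Proof. exact: flow_iter_source. Qed.

Lemma load_unit_demand phi s t e :
  load E phi (unit_demand s t) e = flow E phi s t e.1 * phi t e.
Proof.
rewrite /load (bigD1 s) //= [X in _ + X]big1 ?addr0 => [|s' s's]; last first.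
  by apply: big1 => t' _; rewrite /unit_demand (negPf s's) !mul0r.
rewrite (bigD1 t) //= [X in _ + X]big1 ?addr0 => [|t' t't]; last first.
  by rewrite /unit_demand (negPf t't) andbF !mul0r.
by rewrite /unit_demand !eqxx mul1r.
Qed.

Lemma MxLU_ge0 phi D : 0 <= MxLU E cap phi D.
Proof. exact: bigmax_ge_id. Qed.

Lemma MxLU_ge_load phi D e : e \in E -> load E phi D e / cap e <= MxLU E cap phi D.
Proof. by move=> eE; apply: (bigmax_sup e). Qed.

Lemma OPTU_ge0 D : (0 <= OPTU E cap D)%E.
Proof. by apply: le_ereal_inf_tmp => _ [phi _ <-]; rewrite lee_fin MxLU_ge0. Qed.

Lemma OPTU_le_MxLU phi D :
  PD_routing E phi -> (OPTU E cap D <= (MxLU E cap phi D)%:E)%E.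
Proof.
by move=> PDphi; apply: ge_ereal_inf; exists (MxLU E cap phi D)%:E => //; exists phi.
Qed.

Lemma PERF_ge_ratio phi Ds D a b :
  Ds D -> 0 <= a -> a <= MxLU E cap phi D -> (OPTU E cap D <= b%:E)%E -> 0 < b ->
  ((a / b)%:E <= PERF E cap phi Ds)%E.
Proof.
move=> DsD a_ge0 a_le_M O_le_b b_gt0.
apply: le_trans (ereal_sup_ubound _); last by exists D.
move: O_le_b (OPTU_ge0 D); case: (OPTU E cap D) => [r| |] //; rewrite !lee_fin.
move=> r_le_b; rewrite le0r => /predU1P [->|r_gt0].
  rewrite inve0 mulry; have [->|a_gt0] := eqVneq a 0.
    by rewrite mul0r mule_ge0 // lee_fin sgr_ge0 MxLU_ge0.
  by rewrite gtr0_sg ?mul1e ?leey // (lt_le_trans _ a_le_M) // lt0r a_gt0.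
rewrite inver gt_eqF // -EFinM lee_fin.
by apply: ler_pM; rewrite ?invr_ge0 ?lef_pV2 ?posrE // ltW.
Qed.

End Network.

Arguments unit_demand {R V} s t.

Section CompleteNetwork.
Variables (R : realType) (V : finType).
Implicit Types (phi : V -> V * V -> R).

Definition complete_edges : {set V * V} := [set e | e.1 != e.2].

Lemma connect_complete (u v : V) : connect (edge_rel complete_edges) u v.
Proof.
have [->|uv] := eqVneq u v; first exact: connect0.
by apply: connect1; rewrite /edge_rel inE.
Qed.

Lemma sum_complete_out (F : V * V -> R) u :
  \sum_(e in complete_edges | e.1 == u) F e = \sum_(v | v != u) F (u, v).
Proof.
transitivity (\sum_(a | a == u) \sum_(v | v != a) F (a, v)); last first.
  by rewrite big_pred1_eq.
rewrite pair_big_dep.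
by apply: eq_big => [[a b]|[a b] _] //=; rewrite inE /= andbC [b == a]eq_sym.
Qed.

Lemma sum_complete_in (F : V * V -> R) v :
  \sum_(e in complete_edges | e.2 == v) F e = \sum_(u | u != v) F (u, v).
Proof.
transitivity (\sum_(b | b == v) \sum_(u | u != b) F (u, b)); last first.
  by rewrite big_pred1_eq.
rewrite pair_big_dep.
rewrite (reindex (fun e : V * V => (e.2, e.1))) /=; last first.
  by exists (fun e : V * V => (e.2, e.1)) => -[].
by apply: eq_big => [[a b]|[a b] _] //=; rewrite inE /= andbC.
Qed.

Lemma PD_complete_exists_direct_hop phi t x0 :
  PD_routing complete_edges phi -> x0 != t -> exists2 x, x != t & phi t (x, t) = 1.
Proof.
move=> [cfg acyclic] x0t.
have [/existsP [x /andP [xt /forallP silent]]|/existsPn loud] :=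
  boolP [exists x, (x != t) &&
           [forall y, (y != x) && (y != t) ==> (phi t (x, y) == 0)]].
  exists x => //; rewrite -((cfg t).2 x xt) sum_complete_out (bigD1 t) 1?eq_sym //=.
  rewrite big1 ?addr0 // => y /andP [yx yt].
  by apply/eqP; have := silent y; rewrite yx yt.
pose hop u v := (v != u) && (phi t (u, v) != 0).
have [u /= ut|c nonempty hop_c] := cycle_of_successors (r := hop) (A := predC1 t) _ x0t.
  have := loud u; rewrite ut /= => /forallPn [v].
  by rewrite negb_imply -andbA => /and3P [vu vt nz]; exists v; rewrite //= /hop vu.
have edge_c : cycle (edge_rel complete_edges) c.
  by apply: sub_cycle hop_c => u v /andP [vu _]; rewrite /edge_rel inE eq_sym.
have phi_c : cycle (fun u v => phi t (u, v) != 0) c.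
  by apply: sub_cycle hop_c => u v /andP [].
by have := acyclic t c nonempty edge_c; rewrite phi_c.
Qed.

End CompleteNetwork.

Section SpreadRouting.
Variables (R : realType) (V : finType) (t : V).

Definition direct_routing : V -> V * V -> R :=
  fun t' e => if (e.1 != t') && (e.2 == t') then 1 else 0.

Definition spread_weight : R := (#|V|.-1)%:R^-1.

Definition spread_routing (x : V) : V -> V * V -> R := fun t' e =>
  if (t' == t) && (e.1 == x) then (if e.2 != x then spread_weight else 0)
  else direct_routing t' e.

Lemma spread_weight_ge0 : 0 <= spread_weight.
Proof. by rewrite invr_ge0 ler0n. Qed.

Lemma sum_direct_out t' u : u != t' -> \sum_(v | v != u) direct_routing t' (u, v) = 1.
Proof.
move=> ut'; rewrite (bigD1 t') 1?eq_sym //= /direct_routing ut' eqxx /=.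
by rewrite big1 ?addr0 // => v /andP [_ /negPf ->].
Qed.

Lemma spread_routing_PD x : x != t -> PD_routing (complete_edges V) (spread_routing x).
Proof.
move=> xt; split=> [t'|t' C nonempty _]; first split=> [e _|u ut'].
- rewrite /spread_routing /direct_routing.
  by case: ifP => _; [case: ifP => _; rewrite ?spread_weight_ge0 | case: ifP].
- rewrite sum_complete_out /spread_routing.
  have [/andP [_ /eqP ->]|_] := boolP ((t' == t) && (u == x)); last first.
    exact: sum_direct_out.
  transitivity (\sum_(v | v != x) spread_weight).
    by apply: eq_bigr => v ->.
  rewrite sumr_const cardC1 -mulr_natl mulfV // pnatr_eq0 -lt0n -(cardC1 x).
  by apply/card_gt0P; exists t; rewrite !inE eq_sym.
pose rk v := (if t' == t then (v != x) + (v == t) else v == t')%N.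
apply: (ranked_acyclic (rk := rk)) nonempty => u v.
rewrite /rk /spread_routing /direct_routing /=.
have [->|t't] := eqVneq t' t; last first.
  by case: (u == t') (v == t') => [] []; rewrite /= ?eqxx.
have [->|ux] := eqVneq u x.
  by rewrite (negPf xt); case: (v == x); rewrite /= ?eqxx.
have [->|vt] := eqVneq v t; last by rewrite !andbF /= eqxx.
by rewrite [t == x]eq_sym (negPf xt) andbT; case: (u == t); rewrite /= ?eqxx.
Qed.

Lemma flow_spread_routing x y : y != x -> y != t ->
  flow (complete_edges V) (spread_routing x) x t y = spread_weight.
Proof.
move=> yx yt; have n_gt0 : (0 < #|V|)%N by apply/card_gt0P; exists x.
rewrite /flow -(prednK n_gt0) /= /flow_step (negPf yx) sum_complete_in.
(* Only x forwards t-traffic to y, so one iteration of the flow equations suffices. *)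
rewrite (bigD1 x) 1?eq_sym //= flow_iter_source /spread_routing !eqxx yx mul1r.
rewrite big1 ?addr0 // => u /andP [_ ux].
by rewrite (negPf ux) andbF /direct_routing /= (negPf yt) andbF mulr0.
Qed.

Lemma MxLU_spread_routing x : x != t ->
  MxLU (complete_edges V) (fun=> 1) (spread_routing x) (unit_demand x t)
  <= spread_weight.
Proof.
move=> xt; apply: bigmax_le => [|[a b] ab]; first exact: spread_weight_ge0.
rewrite divr1 load_unit_demand /spread_routing eqxx /=.
have [->|ax] := eqVneq a x.
  by rewrite flow_source mul1r; case: ifP; rewrite ?lexx ?spread_weight_ge0.
have [->|a_t] := eqVneq a t.
  by rewrite /direct_routing eqxx mulr0 spread_weight_ge0.
rewrite flow_spread_routing // /direct_routing a_t /=.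
by case: ifP; rewrite ?mulr1 ?mulr0 ?spread_weight_ge0.
Qed.

End SpreadRouting.

Theorem theorem2 (R : realType) :
  exists c : R, 0 < c /\
  forall N : nat,
    exists (V : finType) (E : {set V * V}) (cap : V * V -> R)
           (Ds : set (V -> V -> R)),
      (N <= #|V|)%N /\
      (forall e, e \in E -> 0 < cap e) /\
      (forall u v : V, connect (edge_rel E) u v) /\
      (forall D, Ds D -> forall s t, 0 <= D s t) /\
      (forall phi, PD_routing E phi ->
         ((c * #|V|%:R)%:E <= PERF E cap phi Ds)%E).
Proof.
exists 2^-1; split=> [|N]; first by rewrite invr_gt0.
pose V : finType := 'I_N.+2; pose t : V := ord0.
pose Ds : set (V -> V -> R) := [set unit_demand x t | x in [set x | x != t]].
exists V, (complete_edges V), (fun=> 1), Ds.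
have card_V : #|V| = N.+2 := card_ord _.
split; first by rewrite card_V leqW.
split; first by move=> *; exact: ltr01.
split; first exact: connect_complete.
split; first by move=> _ [x _ <-] s t'; rewrite /unit_demand; case: ifP.
move=> phi PDphi.
have [x xt phi_xt] := PD_complete_exists_direct_hop PDphi (isT : ord_max != t).
have congested : 1 <= MxLU (complete_edges V) (fun=> 1) phi (unit_demand x t).
  have xt_edge : (x, t) \in complete_edges V by rewrite inE.
  apply: le_trans (MxLU_ge_load _ _ _ xt_edge).
  by rewrite divr1 load_unit_demand flow_source phi_xt mul1r.
have optimal :
    (OPTU (complete_edges V) (fun=> 1%R) (unit_demand x t) <= (spread_weight R V)%:E)%E.
  apply: le_trans (OPTU_le_MxLU _ _ (spread_routing_PD R xt)) _.
  by rewrite lee_fin (MxLU_spread_routing R xt).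
have w_gt0 : 0 < spread_weight R V by rewrite /spread_weight card_V invr_gt0.
have DsD : Ds (unit_demand x t) by exists x.
apply: le_trans (PERF_ge_ratio DsD ler01 congested optimal w_gt0).
rewrite lee_fin /spread_weight card_V /= div1r invrK.
have N_ge0 : 0 <= N%:R :> R := ler0n _ _.
rewrite -[N.+2]addn2 -[N.+1]addn1 !natrD; lra.
Qed.
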